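(* Let $B\ge1$ be an integer and $\alpha=1/\sqrt{B}$. Consider a residual network with hidden states $\mathbf{h}^0=\mathbf{x}\in\mathbb{R}^d$ and $\mathbf{h}^{b+1}=\mathbf{h}^b+\alpha F_b(\mathbf{h}^b)$ for $b=0,\ldots,B-1$, where each $F_b:\mathbb{R}^d\to\mathbb{R}^d$ is differentiable, and let $\ell$ be a differentiable loss of the output $\mathbf{h}^B$. Write $\mathbf{g}^b=\frac{\partial\ell}{\partial\mathbf{h}^b}$, so that $\mathbf{g}^b=\mathbf{g}^{b+1}+\alpha J_b^T\mathbf{g}^{b+1}$ where $J_b$ is the Jacobian of $F_b$ at $\mathbf{h}^b$. Assume that for each $b$, $\lVert J_b^T\mathbf{u}\rVert=\lVert\mathbf{u}\rVert$ for every $\mathbf{u}\in\mathbb{R}^d$, and $\langle\mathbf{g}^{b+1},J_b^T\mathbf{g}^{b+1}\rangle=0$. Then there exists $c\in[\sqrt{2},\sqrt{e}]$ such that $\lVert\mathbf{g}^0\rVert=c\cdot\lVert\mathbf{g}^B\rVert$.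
   Context: $\langle\cdot,\cdot\rangle$ is the Euclidean dot product; gradients are column vectors, and $J_b^T\mathbf{g}^{b+1}$ is the vector-Jacobian product $\frac{\partial F_b}{\partial\mathbf{h}^b}\cdot\frac{\partial\ell}{\partial\mathbf{h}^{b+1}}$. *)

From HB Require Import structures.
From mathcomp Require Import all_boot all_order all_algebra.
From mathcomp Require Import all_classical all_reals all_analysis.
Set Implicit Arguments. Unset Strict Implicit. Unset Printing Implicit Defensive.
Import Order.TTheory GRing.Theory Num.Theory.
Import numFieldNormedType.Exports.
Local Open Scope ring_scope.

Section ResNet.
Context {R : realType} {d : nat}.

Definition dotv (u v : 'rV[R]_d) : R := \sum_(i < d) u 0 i * v 0 i.
Definition enorm (u : 'rV[R]_d) : R := Num.sqrt (dotv u u).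

Definition grad (f : 'rV[R]_d -> R) (p : 'rV[R]_d) : 'rV[R]_d :=
  \row_(i < d) ('d f p) (delta_mx 0 i : 'rV[R]_d).

Definition res_step (alpha : R) (F : nat -> 'rV[R]_d -> 'rV[R]_d) (b : nat)
  (h : 'rV[R]_d) : 'rV[R]_d := h + alpha *: F b h.

Fixpoint res_run (alpha : R) (F : nat -> 'rV[R]_d -> 'rV[R]_d) (b n : nat)
  (h : 'rV[R]_d) : 'rV[R]_d :=
  match n with
  | 0 => h
  | n'.+1 => res_run alpha F b.+1 n' (res_step alpha F b h)
  end.

Definition hidden (alpha : R) F (x : 'rV[R]_d) (b : nat) : 'rV[R]_d :=
  res_run alpha F 0 b x.

(* g^b = d loss / d h^b : gradient at h^b of  h |-> loss(blocks b..B-1 applied to h). *)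
Definition grad_hidden (alpha : R) F (loss : 'rV[R]_d -> R) (B : nat)
  (x : 'rV[R]_d) (b : nat) : 'rV[R]_d :=
  grad (fun h => loss (res_run alpha F b (B - b) h)) (hidden alpha F x b).

End ResNet.

From HB Require Import structures.
From mathcomp Require Import all_boot all_order all_algebra.
From mathcomp Require Import all_classical all_reals all_analysis.
From mathcomp Require Import ring lra.
Import Order.TTheory GRing.Theory Num.Theory.
Import numFieldNormedType.Exports.
Local Open Scope ring_scope.

(* Backpropagation through block b gives g^b = g^(b+1) + alpha J_b^T g^(b+1).
   The two summands are orthogonal and of equal length, so by Pythagoras
   |g^b| = sqrt (1 + alpha^2) |g^(b+1)|, and |g^0| = c |g^B| with
   c^2 = (1 + 1/B)^B.  Bernoulli's inequality gives c^2 >= 2, and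
   1 + 1/B <= e^(1/B) gives c^2 <= e. *)

Section EuclideanGeometry.
Context {R : realType} {d : nat}.
Implicit Types (u v w : 'rV[R]_d).

Lemma dotvE u v : dotv u v = (u *m v^T) 0 0.
Proof. by rewrite mxE; apply: eq_bigr => i _; rewrite mxE. Qed.

Lemma dotvC u v : dotv u v = dotv v u.
Proof. by rewrite /dotv; apply: eq_bigr => i _; rewrite mulrC. Qed.

Lemma dotvDl u v w : dotv (u + v) w = dotv u w + dotv v w.
Proof. by rewrite !dotvE mulmxDl mxE. Qed.

Lemma dotvZl (a : R) u w : dotv (a *: u) w = a * dotv u w.
Proof. by rewrite !dotvE -scalemxAl mxE. Qed.

Lemma dotvDr u v w : dotv w (u + v) = dotv w u + dotv w v.
Proof. by rewrite dotvC dotvDl !(dotvC w). Qed.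

Lemma dotvZr (a : R) u w : dotv w (a *: u) = a * dotv w u.
Proof. by rewrite dotvC dotvZl dotvC. Qed.

Lemma dotv_ge0 u : 0 <= dotv u u.
Proof. by apply: sumr_ge0 => i _; rewrite -expr2 sqr_ge0. Qed.

Lemma dotv_delta u (i : 'I_d) : dotv u (delta_mx 0 i) = u 0 i.
Proof. by rewrite dotvE trmx_delta -colE mxE. Qed.

Lemma dotv_mulmx_tr u v (M : 'M[R]_d) : dotv u (v *m M) = dotv (u *m M^T) v.
Proof. by rewrite !dotvE trmx_mul mulmxA. Qed.

Lemma enorm_eqE u v : (enorm u == enorm v) = (dotv u u == dotv v v).
Proof. by rewrite /enorm eqr_sqrt ?dotv_ge0. Qed.

Lemma enorm_add_orth u w (a : R) : dotv u w = 0 -> enorm w = enorm u ->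
  enorm (u + a *: w) = Num.sqrt (1 + a ^+ 2) * enorm u.
Proof.
move=> uw0 /eqP; rewrite enorm_eqE => /eqP ww.
rewrite /enorm -sqrtrM ?addr_ge0 ?sqr_ge0 //; congr Num.sqrt.
rewrite !(dotvDl, dotvDr, dotvZl, dotvZr) (dotvC w u) uw0 ww; ring.
Qed.

Lemma diff_dotv_grad (f : 'rV[R]_d -> R) p v : 'd f p v = dotv (grad f p) v.
Proof.
rewrite {1}(row_sum_delta v) linear_sum /dotv; apply: eq_bigr => i _.
by rewrite linearZ /= mxE mulrC.
Qed.

End EuclideanGeometry.

Section ResidualStep.
Context {R : realType} {d : nat}.
Variables (alpha : R) (F : nat -> 'rV[R]_d -> 'rV[R]_d).

Lemma is_diff_res_step b p : differentiable (F b) p ->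
  is_diff p (res_step alpha F b) (fun v => v + alpha *: (v *m 'J (F b) p)).
Proof.
move=> /differentiableP Fd; apply: is_diff_eq (is_diffD _ (is_diffZ alpha Fd)) _.
by apply/funext => v /=; rewrite /jacobian mul_rV_lin1.
Qed.

Lemma grad_comp_res_step b (f : 'rV[R]_d -> R) p :
  differentiable (F b) p -> differentiable f (res_step alpha F b p) ->
  let g := grad f (res_step alpha F b p) in
  grad (f \o res_step alpha F b) p = g + alpha *: (g *m ('J (F b) p)^T).
Proof.
move=> Fd fd g; case: (is_diff_res_step b p Fd) => step_diff step_d.
apply/rowP => i; rewrite [LHS]mxE diff_comp //= step_d diff_dotv_grad -/g.
by rewrite dotvDr dotvZr dotv_mulmx_tr !dotv_delta !mxE.
Qed.

Lemma res_run_succ b n h :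
  res_run alpha F b n.+1 h = res_step alpha F (b + n) (res_run alpha F b n h).
Proof.
elim: n b h => [|n IH] b h; first by rewrite addn0.
by rewrite [LHS]IH addSnnS.
Qed.

Lemma differentiable_res_run B b n :
  (forall k, (k < B)%N -> forall y, differentiable (F k) y) ->
  (b + n <= B)%N -> forall h, differentiable (res_run alpha F b n) h.
Proof.
move=> Fd; elim: n b => [|n IH] b bnB h; first exact: ex_diff.
apply: (@differentiable_comp _ _ _ _ (res_step alpha F b) (res_run alpha F b.+1 n)).
  have bB : (b < B)%N by rewrite -addn1 (leq_trans _ bnB) ?leq_add2l.
  by case: (is_diff_res_step b h (Fd b bB h)).
by apply: IH; rewrite addSnnS.
Qed.

End ResidualStep.

Section ResNetGradients.
Context {R : realType} {d : nat}.
Context {alpha : R} {F : nat -> 'rV[R]_d -> 'rV[R]_d} {loss : 'rV[R]_d -> R}.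
Context {B : nat} {x : 'rV[R]_d}.
Hypothesis F_diff : forall b, (b < B)%N -> forall y, differentiable (F b) y.
Hypothesis loss_diff : forall y, differentiable loss y.

Lemma hidden_succ b : hidden alpha F x b.+1 = res_step alpha F b (hidden alpha F x b).
Proof. by rewrite /hidden res_run_succ add0n. Qed.

Lemma grad_hidden_succ b : (b < B)%N ->
  let g := grad_hidden alpha F loss B x in
  g b = g b.+1 + alpha *: (g b.+1 *m ('J (F b) (hidden alpha F x b))^T).
Proof.
move=> bB g; rewrite /g /grad_hidden -(subnSK bB) hidden_succ.
have -> : (fun y => loss (res_run alpha F b (B - b.+1).+1 y)) =
    (fun y => loss (res_run alpha F b.+1 (B - b.+1) y)) \o res_step alpha F b by [].
apply: grad_comp_res_step; first exact: F_diff.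
apply: (differentiable_comp (f := res_run alpha F b.+1 (B - b.+1))) => //.
by apply: (differentiable_res_run alpha F B) => //; rewrite subnKC.
Qed.

End ResNetGradients.

Lemma bernoulli_ineq {R : realDomainType} n (x : R) :
  0 <= x -> 1 + n%:R * x <= (1 + x) ^+ n.
Proof.
move=> x_ge0; elim: n => [|n IH]; first by rewrite mul0r addr0 expr0.
have n_ge0 : (0 : R) <= n%:R by rewrite ler0n.
rewrite exprS -natr1; apply: le_trans (_ : (1 + x) * (1 + n%:R * x) <= _).
  nra.
by rewrite ler_pM2l ?ltr_pwDl.
Qed.

Lemma expr_one_add_inv_bounds {R : realType} n : (0 < n)%N ->
  2 <= (1 + n%:R^-1 : R) ^+ n <= expR 1.
Proof.
move=> n_gt0; have n_neq0 : n%:R != 0 :> R by rewrite pnatr_eq0 -lt0n.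
have n_inv_ge0 : 0 <= n%:R^-1 :> R by rewrite invr_ge0 ler0n.
apply/andP; split; first by have := bernoulli_ineq n _ n_inv_ge0; rewrite mulfV.
rewrite -[in leRHS](mulfV n_neq0) expRM_natl lerXn2r ?nnegrE ?expR_ge0 //.
exact: expR_ge1Dx.
Qed.

Lemma mulr_expr_of_backward_step {R : pzRingType} {u : nat -> R} {c : R} {n} :
  (forall b, (b < n)%N -> u b = c * u b.+1) -> u 0%N = c ^+ n * u n.
Proof.
elim: n u => [|n IH] u step; first by rewrite expr0 mul1r.
rewrite step // (IH (fun b => u b.+1)) => [|b bn]; first by rewrite mulrA -exprS.
exact: step.
Qed.

Lemma sqrtrX {R : rcfType} (a : R) n : 0 <= a -> Num.sqrt a ^+ n = Num.sqrt (a ^+ n).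
Proof.
move=> a_ge0; elim: n => [|n IH]; first by rewrite !expr0 sqrtr1.
by rewrite !exprS IH sqrtrM.
Qed.

Theorem theorem4 (R : realType) (d B : nat)
    (F : nat -> 'rV[R]_d -> 'rV[R]_d) (loss : 'rV[R]_d -> R) (x : 'rV[R]_d) :
  (1 <= B)%N ->
  let alpha : R := 1 / Num.sqrt (B%:R) in
  (forall b, (b < B)%N -> forall y, differentiable (F b) y) ->
  (forall y, differentiable loss y) ->
  let h := hidden alpha F x in
  let g := grad_hidden alpha F loss B x in
  (forall b, (b < B)%N -> forall u : 'rV[R]_d,
      enorm (u *m ('J (F b) (h b))^T) = enorm u) ->
  (forall b, (b < B)%N ->
      dotv (g b.+1) (g b.+1 *m ('J (F b) (h b))^T) = 0) ->
  exists c : R, Num.sqrt 2 <= c <= Num.sqrt (expR 1) /\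
    enorm (g 0%N) = c * enorm (g B).
Proof.
move=> B_gt0 alpha F_diff loss_diff h g J_iso g_orth.
have norm_step b : (b < B)%N ->
    enorm (g b) = Num.sqrt (1 + alpha ^+ 2) * enorm (g b.+1).
  move=> bB; rewrite /g (grad_hidden_succ F_diff loss_diff) //.
  by rewrite enorm_add_orth ?J_iso ?g_orth.
exists (Num.sqrt (1 + alpha ^+ 2) ^+ B); split; last first.
  exact: (mulr_expr_of_backward_step (u := fun b => enorm (g b))).
have -> : alpha ^+ 2 = B%:R^-1.
  by rewrite /alpha expr_div_n expr1n sqr_sqrtr ?ler0n // div1r.
have /andP[two_le le_e] := @expr_one_add_inv_bounds R B B_gt0.
by rewrite sqrtrX ?addr_ge0 ?invr_ge0 ?ler0n // !ler_sqrt ?two_le ?le_e ?expR_ge0.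
Qed.
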